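(* Let $\Phi=\sum_{k=1}^{15}\Phi_k$ and $\Phi^*$ be as in the context. For each of the fifteen 8-form terms $e_{\mu_1\mu_2\cdots\mu_8}$ of $\Phi^*$ ($\mu_1<\dots<\mu_8$), consider the seven pairings of its indices $C_1=\{\mu_1\mu_2,\mu_3\mu_4,\mu_5\mu_6,\mu_7\mu_8\}$, $C_2=\{\mu_1\mu_3,\mu_2\mu_4,\mu_5\mu_7,\mu_6\mu_8\}$, $C_3=\{\mu_1\mu_4,\mu_2\mu_3,\mu_5\mu_8,\mu_6\mu_7\}$, $M_1=\{\mu_1\mu_5,\mu_2\mu_6,\mu_3\mu_7,\mu_4\mu_8\}$, $M_2=\{\mu_1\mu_6,\mu_2\mu_5,\mu_3\mu_8,\mu_4\mu_7\}$, $M_3=\{\mu_1\mu_7,\mu_2\mu_8,\mu_3\mu_5,\mu_4\mu_6\}$, $M_4=\{\mu_1\mu_8,\mu_2\mu_7,\mu_3\mu_6,\mu_4\mu_5\}$. For a pairing $\{a_1b_1,a_2b_2,a_3b_3,a_4b_4\}$ ($a_i<b_i$) and a sign pattern $(\epsilon_1,\epsilon_2,\epsilon_3,\epsilon_4)\in\{(+,+,+,+),(+,+,-,-),(+,-,+,-),(+,-,-,+)\}$, put $$R=\tfrac14(1+\epsilon_1e_{a_1b_1})(1+\epsilon_2e_{a_2b_2})(1+\epsilon_3e_{a_3b_3})(1+\epsilon_4e_{a_4b_4}),$$ a product of four commuting $90^\circ$ rotors in $\mathrm{Spin}(15)$. Then $R\Phi R^{-1}=\sum_{k=1}^{15}\eta_k\Phi_k$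 for some signs $\eta_k\in\{\pm1\}$, i.e. conjugation by $R$ permutes the fifteen 7-form terms of $\Phi$ up to sign. This yields $15\times7=105$ distinct quadruples of rotation planes (''primary invariants''), and $420$ invariants when the four sign patterns are included.
   Context: $Cl_{15}$ denotes the real Clifford algebra generated by $e_1,\dots,e_{15}$, with indices written in hexadecimal ($A=10,\dots,F=15$), subject to $e_i^2=+1$ and $e_ie_j=-e_je_i$ for $i\neq j$. For increasing indices $i_1<\dots<i_k$, $e_{i_1\cdots i_k}=e_{i_1}\cdots e_{i_k}$. The fifteen terms $\Phi_k$ of $\Phi$ are the 7-forms $e_{1234567}$, $e_{12389AB}$, $e_{14589CD}$, $e_{16789EF}$, $e_{2468ACE}$, $e_{2578ADF}$, $e_{3478BCF}$, $e_{3568BDE}$, $e_{123CDEF}$, $e_{145ABEF}$, $e_{167ABCD}$, $e_{2469BDF}$, $e_{2579BCE}$, $e_{3479ADE}$, $e_{3569ACF}$. $\Phi^*=-e_{123456789ABCDEF}\Phi$, whose fifteen terms are the 8-forms $e_{12478BDE}$, $e_{12479ACF}$, $e_{12568BCF}$, $e_{12569ADE}$, $e_{13468ADF}$, $e_{13469BCE}$, $e_{13578ACE}$, $e_{13579BDF}$, $e_{234589EF}$, $e_{2345ABCD}$, $e_{236789CD}$, $e_{2367ABEF}$, $e_{456789AB}$, $e_{4567CDEF}$, $e_{89ABCDEF}$. *)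

From HB Require Import structures.
From mathcomp Require Import all_boot all_order all_algebra.
Set Implicit Arguments. Unset Strict Implicit. Unset Printing Implicit Defensive.
Import Order.TTheory GRing.Theory Num.Theory.
Local Open Scope ring_scope.

Section Cl15.
Variable R : realFieldType.

(* Basis blades of Cl_15 are indexed by subsets of {1..15}; the paper's index
   i (1..15, hex 1..F) is the ordinal i-1 of 'I_15. *)
Definition blade_idx := {set 'I_15}.

(* A multivector: its coordinates on the basis blades e_A
   (e_A = product of the generators in A in increasing order). *)
Notation mv := {ffun blade_idx -> R}.

(* e_A e_B = (-1)^(#{(i,j) : i in A, j in B, j < i}) e_(A symdiff B),
   which is the multiplication of basis blades forced by
   e_i^2 = +1 and e_i e_j = - e_j e_i (i <> j). *)
Definition bsign (A B : blade_idx) : R :=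
  (-1) ^+ #|[set p : 'I_15 * 'I_15 | (p.1 \in A) && (p.2 \in B) && (p.2 < p.1)%N]|.

Definition symdiff (A B : blade_idx) : blade_idx := (A :\: B) :|: (B :\: A).

Definition cmul (x y : mv) : mv :=
  [ffun C => \sum_(A : blade_idx) \sum_(B : blade_idx)
       (if symdiff A B == C then bsign A B * x A * y B else 0)].

Definition blade (A : blade_idx) : mv := [ffun B => (B == A)%:R].

Definition cone : mv := blade set0.

Definition cscale (c : R) (x : mv) : mv := [ffun A => c * x A].

Definition gen (i : nat) : mv := blade [set (inord i.-1 : 'I_15)].

Definition eprod (s : seq nat) : mv := foldr (fun i acc => cmul (gen i) acc) cone s.

End Cl15.

Definition Phi_terms : seq (seq nat) :=
  [:: [:: 1;2;3;4;5;6;7];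
      [:: 1;2;3;8;9;10;11];
      [:: 1;4;5;8;9;12;13];
      [:: 1;6;7;8;9;14;15];
      [:: 2;4;6;8;10;12;14];
      [:: 2;5;7;8;10;13;15];
      [:: 3;4;7;8;11;12;15];
      [:: 3;5;6;8;11;13;14];
      [:: 1;2;3;12;13;14;15];
      [:: 1;4;5;10;11;14;15];
      [:: 1;6;7;10;11;12;13];
      [:: 2;4;6;9;11;13;15];
      [:: 2;5;7;9;11;12;14];
      [:: 3;4;7;9;10;13;14];
      [:: 3;5;6;9;10;12;15] ].

Definition PhiStar_terms : seq (seq nat) :=
  [:: [:: 1;2;4;7;8;11;13;14];
      [:: 1;2;4;7;9;10;12;15];
      [:: 1;2;5;6;8;11;12;15];
      [:: 1;2;5;6;9;10;13;14];
      [:: 1;3;4;6;8;10;13;15];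
      [:: 1;3;4;6;9;11;12;14];
      [:: 1;3;5;7;8;10;12;14];
      [:: 1;3;5;7;9;11;13;15];
      [:: 2;3;4;5;8;9;14;15];
      [:: 2;3;4;5;10;11;12;13];
      [:: 2;3;6;7;8;9;12;13];
      [:: 2;3;6;7;10;11;14;15];
      [:: 4;5;6;7;8;9;10;11];
      [:: 4;5;6;7;12;13;14;15];
      [:: 8;9;10;11;12;13;14;15] ].

(* The seven pairings C1,C2,C3,M1,M2,M3,M4, as pairs of (0-based) positions
   into mu_1 < ... < mu_8. *)
Definition pairings : seq (seq (nat * nat)) :=
  [:: [:: (0,1); (2,3); (4,5); (6,7)];
      [:: (0,2); (1,3); (4,6); (5,7)];
      [:: (0,3); (1,2); (4,7); (5,6)];
      [:: (0,4); (1,5); (2,6); (3,7)];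
      [:: (0,5); (1,4); (2,7); (3,6)];
      [:: (0,6); (1,7); (2,4); (3,5)];
      [:: (0,7); (1,6); (2,5); (3,4)] ].

(* The four sign patterns (true = minus sign). *)
Definition sign_patterns : seq (seq bool) :=
  [:: [:: false; false; false; false];
      [:: false; false; true; true];
      [:: false; true; false; true];
      [:: false; true; true; false] ].

Section Rotors.
Variable R : realFieldType.
Local Notation mv := {ffun blade_idx -> R}.

Definition Phi_k (k : 'I_15) : mv := eprod R (nth [::] Phi_terms k).
Definition Phi : mv := \sum_(k < 15) Phi_k k.

Definition planes (t : 'I_15) (p : 'I_7) : seq (nat * nat) :=
  let mu := nth [::] PhiStar_terms t in
  [seq (nth 0%N mu q.1, nth 0%N mu q.2) | q <- nth [::] pairings p].

Definition plane_set (t : 'I_15) (p : 'I_7) : {set {set 'I_15}} :=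
  [set S in [seq [set (inord ab.1.-1 : 'I_15); (inord ab.2.-1 : 'I_15)]
             | ab <- planes t p]].

Definition rotor (t : 'I_15) (p : 'I_7) (s : 'I_4) : mv :=
  cscale (1 / 4 : R)
  (foldr (fun f acc => cmul f acc) (cone R)
    [seq cone R + cscale ((-1) ^+ (eb.2 : bool) : R) (eprod R [:: eb.1.1; eb.1.2])
       | eb : (nat * nat) * bool <- zip (planes t p) (nth [::] sign_patterns s)]).

End Rotors.

Notation mvT R := {ffun blade_idx -> R}.

From HB Require Import structures.
From mathcomp Require Import all_boot all_order all_algebra.
From mathcomp Require Import ring zify.
Import Order.TTheory GRing.Theory Num.Theory.
Local Open Scope ring_scope.

(* Basis blades multiply as e_A e_B = +-e_(A xor B), so a signed blade is
   encoded exactly by a sign bit and a 15-bit key.  A rotor factor 1 + U, with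
   U = +-e_ab and U^2 = -1, conjugates a blade X to 2X when X commutes with U
   and to 2UX when it anticommutes; hence conjugation by R = (1/4) prod (1 + U_i)
   sends each term of Phi to a signed blade, and a finite computation shows the
   fifteen resulting keys are a permutation of those of Phi.  Expanding R, its
   coefficients on 2-blades are +-1/4 at its four planes (with the sign pattern)
   and 0 elsewhere, so R determines its planes and signs; the 105 quadruples of
   planes are pairwise distinct, again by computation. *)

Section CliffordProduct.
Variable R : realFieldType.
Local Notation mv := {ffun blade_idx -> R}.
Local Notation bl := (blade R).

Lemma cscaleA (a b : R) (x : mv) : cscale a (cscale b x) = cscale (a * b) x.
Proof. by apply/ffunP => C; rewrite !ffunE mulrA. Qed.

Lemma cscaleDl (a b : R) (x : mv) : cscale (a + b) x = cscale a x + cscale b x.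
Proof. by apply/ffunP => C; rewrite !ffunE mulrDl. Qed.

Lemma cscale0 (x : mv) : cscale 0 x = 0.
Proof. by apply/ffunP => C; rewrite !ffunE mul0r. Qed.

Lemma cscale1 (x : mv) : cscale 1 x = x.
Proof. by apply/ffunP => C; rewrite !ffunE mul1r. Qed.

Lemma cscaleN1 (x : mv) : cscale (-1) x = - x.
Proof. by apply/ffunP => C; rewrite !ffunE mulN1r. Qed.

Lemma cscale_sumr I (r : seq I) (a : R) (F : I -> mv) :
  cscale a (\sum_(i <- r) F i) = \sum_(i <- r) cscale a (F i).
Proof.
apply/ffunP => C; rewrite !ffunE !sum_ffunE mulr_sumr.
by apply: eq_bigr => i _; rewrite ffunE.
Qed.

Lemma mv_blade_decomp (x : mv) : x = \sum_(A : blade_idx) cscale (x A) (bl A).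
Proof.
apply/ffunP => C; rewrite sum_ffunE (bigD1 C) //= big1 => [|A /negbTE nAC].
  by rewrite !ffunE eqxx mulr1 addr0.
by rewrite !ffunE eq_sym nAC mulr0.
Qed.

Lemma cmulE (x y : mv) : cmul x y =
  \sum_(A : blade_idx) \sum_(B : blade_idx) cscale (x A * y B * bsign R A B) (bl (symdiff A B)).
Proof.
apply/ffunP => C; rewrite !ffunE sum_ffunE; apply: eq_bigr => A _.
rewrite sum_ffunE; apply: eq_bigr => B _; rewrite !ffunE eq_sym.
case: eqP => _; rewrite ?mulr1 ?mulr0 //.
by rewrite [RHS]mulrC mulrA.
Qed.

Lemma cmulDl (x1 x2 y : mv) : cmul (x1 + x2) y = cmul x1 y + cmul x2 y.
Proof.
rewrite !cmulE -big_split; apply: eq_bigr => A _; rewrite -big_split.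
by apply: eq_bigr => B _; rewrite ffunE !mulrDl cscaleDl.
Qed.

Lemma cmulDr (x y1 y2 : mv) : cmul x (y1 + y2) = cmul x y1 + cmul x y2.
Proof.
rewrite !cmulE -big_split; apply: eq_bigr => A _; rewrite -big_split.
by apply: eq_bigr => B _; rewrite ffunE mulrDr !mulrDl cscaleDl.
Qed.

Lemma cmulZl (a : R) (x y : mv) : cmul (cscale a x) y = cscale a (cmul x y).
Proof.
rewrite !cmulE cscale_sumr; apply: eq_bigr => A _; rewrite cscale_sumr.
by apply: eq_bigr => B _; rewrite ffunE cscaleA !mulrA.
Qed.

Lemma cmulZr (a : R) (x y : mv) : cmul x (cscale a y) = cscale a (cmul x y).
Proof.
rewrite !cmulE cscale_sumr; apply: eq_bigr => A _; rewrite cscale_sumr.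
by apply: eq_bigr => B _; rewrite ffunE cscaleA !mulrA [a * _]mulrC.
Qed.

Lemma cmul0l (y : mv) : cmul 0 y = 0.
Proof.
by rewrite cmulE big1 // => A _; rewrite big1 // => B _; rewrite ffunE !mul0r cscale0.
Qed.

Lemma cmul0r (x : mv) : cmul x 0 = 0.
Proof.
by rewrite cmulE big1 // => A _; rewrite big1 // => B _; rewrite ffunE mulr0 !mul0r cscale0.
Qed.

Lemma cmulNl (x y : mv) : cmul (- x) y = - cmul x y.
Proof. by rewrite -cscaleN1 cmulZl cscaleN1. Qed.

Lemma cmulNr (x y : mv) : cmul x (- y) = - cmul x y.
Proof. by rewrite -cscaleN1 cmulZr cscaleN1. Qed.

Lemma cmulBr (x y1 y2 : mv) : cmul x (y1 - y2) = cmul x y1 - cmul x y2.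
Proof. by rewrite cmulDr cmulNr. Qed.

Lemma cmul_suml I (r : seq I) (F : I -> mv) y :
  cmul (\sum_(i <- r) F i) y = \sum_(i <- r) cmul (F i) y.
Proof.
elim: r => [|i r IH]; last by rewrite !big_cons cmulDl IH.
by rewrite !big_nil cmul0l.
Qed.

Lemma cmul_sumr I (r : seq I) (F : I -> mv) y :
  cmul y (\sum_(i <- r) F i) = \sum_(i <- r) cmul y (F i).
Proof.
elim: r => [|i r IH]; last by rewrite !big_cons cmulDr IH.
by rewrite !big_nil cmul0r.
Qed.

Lemma cmul_blade A B : cmul (bl A) (bl B) = cscale (bsign R A B) (bl (symdiff A B)).
Proof.
rewrite cmulE (bigD1 A) //= [X in _ + X]big1 => [|A' /negbTE nA'].
  rewrite addr0 (bigD1 B) //= [X in _ + X]big1 => [|B' /negbTE nB'].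
    by rewrite addr0 !ffunE !eqxx !mul1r.
  by rewrite !ffunE nB' mulr0 mul0r cscale0.
by rewrite big1 // => B' _; rewrite !ffunE nA' !mul0r cscale0.
Qed.

Definition inversions (A B : blade_idx) : {set 'I_15 * 'I_15} :=
  [set p | (p.1 \in A) && (p.2 \in B) && (p.2 < p.1)%N].

Lemma odd_card_symdiff (T : finType) (A B : {set T}) :
  odd #|(A :\: B) :|: (B :\: A)| = odd #|A| (+) odd #|B|.
Proof.
have disj : (A :\: B) :&: (B :\: A) = set0.
  by apply/setP => x; rewrite !inE; case: (x \in A); case: (x \in B).
have := cardsUI (A :\: B) (B :\: A); rewrite disj cards0 addn0 => ->.
rewrite -(cardsID B A) -(cardsID A B) setIC !oddD.
by case: (odd _); case: (odd _); case: (odd _).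
Qed.

(* The inversions of [A xor B] against [C] are the symmetric difference of
   those of [A] and of [B], and symmetrically in the second argument. *)
Lemma bsign_cocycle A B C :
  bsign R A B * bsign R (symdiff A B) C = bsign R B C * bsign R A (symdiff B C).
Proof.
rewrite /bsign -!exprD -signr_odd -[RHS]signr_odd; congr (_ ^+ _).
have inv_l X Y Z : inversions (symdiff X Y) Z =
    (inversions X Z :\: inversions Y Z) :|: (inversions Y Z :\: inversions X Z).
  apply/setP => p; rewrite !inE.
  by case: (p.1 \in X); case: (p.1 \in Y); case: (p.2 \in Z); case: (p.2 < p.1)%N.
have inv_r X Y Z : inversions X (symdiff Y Z) =
    (inversions X Y :\: inversions X Z) :|: (inversions X Z :\: inversions X Y).
  apply/setP => p; rewrite !inE.
  by case: (p.1 \in X); case: (p.2 \in Y); case: (p.2 \in Z); case: (p.2 < p.1)%N.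
rewrite !oddD -!/(inversions _ _) inv_l inv_r !odd_card_symdiff.
by case: (odd #|inversions A B|); case: (odd #|inversions A C|); case: (odd #|inversions B C|).
Qed.

Lemma symdiffA : associative symdiff.
Proof.
move=> X Y Z; apply/setP => p; rewrite !inE.
by case: (p \in X); case: (p \in Y); case: (p \in Z).
Qed.

Lemma cmulA : associative (@cmul R).
Proof.
have assoc3 A B C : cmul (cmul (bl A) (bl B)) (bl C) = cmul (bl A) (cmul (bl B) (bl C)).
  by rewrite !cmul_blade cmulZl cmulZr !cmul_blade !cscaleA bsign_cocycle symdiffA.
have assoc2 A B z : cmul (cmul (bl A) (bl B)) z = cmul (bl A) (cmul (bl B) z).
  rewrite [z]mv_blade_decomp !cmul_sumr; apply: eq_bigr => C _.
  by rewrite !cmulZr assoc3.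
have assoc1 A y z : cmul (cmul (bl A) y) z = cmul (bl A) (cmul y z).
  rewrite [y]mv_blade_decomp cmul_sumr !cmul_suml cmul_sumr; apply: eq_bigr => B _.
  by rewrite cmulZr !cmulZl cmulZr assoc2.
move=> x y z; rewrite [x]mv_blade_decomp !cmul_suml; apply: eq_bigr => A _.
by rewrite !cmulZl assoc1.
Qed.

Lemma cmul1l (x : mv) : cmul (cone R) x = x.
Proof.
rewrite [x]mv_blade_decomp cmul_sumr; apply: eq_bigr => A _.
rewrite cmulZr cmul_blade /bsign (_ : [set _ | _] = set0) ?cards0 ?cscale1.
  by congr cscale; congr bl; apply/setP => i; rewrite !inE; case: (i \in A).
by apply/setP => p; rewrite !inE.
Qed.

Lemma cmul1r (x : mv) : cmul x (cone R) = x.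
Proof.
rewrite [x]mv_blade_decomp cmul_suml; apply: eq_bigr => A _.
rewrite cmulZl cmul_blade /bsign (_ : [set _ | _] = set0) ?cards0 ?cscale1.
  by congr cscale; congr bl; apply/setP => i; rewrite !inE; case: (i \in A).
by apply/setP => p; rewrite !inE andbF.
Qed.

Lemma inverse_unique {x y z : mv} :
  cmul y x = cone R -> cmul x z = cone R -> y = z.
Proof. by move=> yx xz; rewrite -[y]cmul1r -xz cmulA yx cmul1l. Qed.

End CliffordProduct.

Definition key := seq bool.

Definition kset (k : key) : blade_idx := [set i : 'I_15 | nth false k i].

Fixpoint xorl (a b : key) : key :=
  match a, b with
  | [::], _ => b
  | _, [::] => a
  | x :: a', y :: b' => (x (+) y) :: xorl a' b'
  end.

Lemma nth_xorl a b i : nth false (xorl a b) i = nth false a i (+) nth false b i.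
Proof. by elim: a b i => [|x a IH] [|y b] [|i] //=; rewrite addbF. Qed.

Lemma kset_xorl a b : kset (xorl a b) = symdiff (kset a) (kset b).
Proof.
apply/setP => i; rewrite !inE nth_xorl.
by case: (nth false a i); case: (nth false b i).
Qed.

Lemma kset_nil : kset [::] = set0.
Proof. by apply/setP => i; rewrite !inE nth_nil. Qed.

(* The accumulator [c] is the parity of the bits of [b] already passed. *)
Fixpoint kpar (n : nat) (a b : key) (c : bool) : bool :=
  if n is n'.+1 then
    (head false a && c) (+) kpar n' (behead a) (behead b) (c (+) head false b)
  else false.

Definition kswap (a b : key) : bool := kpar 15 a b false.

Lemma kparE n a b c :
  kpar n a b (odd c) = odd (\sum_(i < n) nth false a i * (c + \sum_(j < i) nth false b j)).
Proof.
elim: n a b c => [|n IH] a b c; first by rewrite big_ord0.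
rewrite big_ord_recl /= big_ord0 addn0.
have -> : odd c (+) head false b = odd (c + nth false b 0) by rewrite oddD oddb; case: b.
rewrite IH oddD oddM oddb (_ : head false a = nth false a 0); last by case: a.
congr (_ (+) odd _); apply: eq_bigr => i _.
rewrite /bump /= add1n big_ord_recl -!nth_behead addnA; congr (_ * (_ + _))%N.
by apply: eq_bigr => j _; rewrite nth_behead.
Qed.

Lemma kswapE a b : kswap a b = odd #|inversions (kset a) (kset b)|.
Proof.
rewrite /kswap (kparE 15 a b 0); congr odd.
have -> : (\sum_(i < 15) nth false a i * (0 + \sum_(j < i) nth false b j) =
    \sum_(i < 15) \sum_(j < 15) (nth false a i && nth false b j && (j < i)))%N.
  apply: eq_bigr => i _.
  rewrite add0n (big_ord_widen 15 (fun j => nth false b j : nat)) ?(ltnW (ltn_ord i)) //.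
  rewrite big_distrr /= big_mkcond; apply: eq_bigr => j _.
  by case: (nth false a i); case: (nth false b j); case: (j < i)%N.
rewrite pair_bigA /= -sum1_card [RHS]big_mkcond /=; apply: eq_bigr => -[i j] _ /=.
by rewrite !inE.
Qed.

Definition sblade := (bool * key)%type.

Definition sbmul (x y : sblade) : sblade := (x.1 (+) y.1 (+) kswap x.2 y.2, xorl x.2 y.2).

Definition sbone : sblade := (false, [::]).

(* The guard reproduces the junk value of [inord] on out-of-range indices. *)
Definition gkey (i : nat) : key := mkseq (pred1 (if (i.-1 < 15)%N then i.-1 else 0%N)) 15.

Definition ekey (l : seq nat) : sblade := foldr (fun i x => sbmul (false, gkey i) x) sbone l.

Lemma kset_gkey i : kset (gkey i) = [set inord i.-1].
Proof.
apply/setP => x; rewrite !inE nth_mkseq // -val_eqE /= /inord val_insubd /=.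
by case: ifP.
Qed.

Lemma kset_ekey l : kset (ekey l).2 = foldr (fun i S => symdiff [set inord i.-1] S) set0 l.
Proof.
elim: l => [|i l IH]; first exact: kset_nil.
have -> : (ekey (i :: l)).2 = xorl (gkey i) (ekey l).2 by [].
by rewrite kset_xorl kset_gkey IH.
Qed.

Section SignedBlades.
Variable R : realFieldType.
Local Notation mv := {ffun blade_idx -> R}.

Definition sb (x : sblade) : mv := cscale ((-1) ^+ x.1) (blade R (kset x.2)).

Lemma sb_mul x y : cmul (sb x) (sb y) = sb (sbmul x y).
Proof.
rewrite /sb cmulZl cmulZr cmul_blade !cscaleA kset_xorl; congr cscale.
rewrite /bsign -/(inversions _ _) -[(-1) ^+ #|_|]signr_odd -kswapE -!signr_addb /=.
by case: x.1; case: y.1; case: (kswap _ _).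
Qed.

Lemma sb_one : sb sbone = cone R.
Proof. by rewrite /sb kset_nil cscale1. Qed.

Lemma eprod_sb l : eprod R l = sb (ekey l).
Proof.
elim: l => [|i l IH] /=; first by rewrite sb_one.
by rewrite IH -sb_mul /sb kset_gkey cscale1.
Qed.

Lemma sb_coef x S : sb x S = (-1) ^+ x.1 * (kset x.2 == S)%:R.
Proof. by rewrite !ffunE eq_sym. Qed.

Lemma sb_commute x y :
  cmul (sb x) (sb y) = cscale ((-1) ^+ (kswap x.2 y.2 (+) kswap y.2 x.2)) (cmul (sb y) (sb x)).
Proof.
rewrite !sb_mul /sb cscaleA -signr_addb !kset_xorl; congr (cscale _ (blade _ _)).
  by rewrite /=; case: x.1; case: y.1; case: (kswap x.2 y.2); case: (kswap y.2 x.2).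
by rewrite /symdiff setUC.
Qed.

Lemma sb_sqr u : cmul (sb u) (sb u) = cscale ((-1) ^+ kswap u.2 u.2) (cone R).
Proof.
rewrite sb_mul /sb kset_xorl; congr (cscale _ (blade _ _)).
  by rewrite /= addbb.
by rewrite /symdiff setDv setU0.
Qed.

End SignedBlades.

Section RotorFactor.
Context {R : realFieldType} {U : mvT R}.
Hypothesis U_sqr : cmul U U = - cone R.

Lemma rotor_factor_inv :
  cmul (cone R + U) (cone R - U) = cscale 2 (cone R) /\
  cmul (cone R - U) (cone R + U) = cscale 2 (cone R).
Proof.
rewrite !cmulDl !cmulDr !cmulNl !cmulNr !cmul1l !cmul1r U_sqr.
by split; apply/ffunP => A; rewrite !ffunE; ring.
Qed.

Lemma rotor_factor_conj_comm X :
  cmul U X = cmul X U -> cmul (cmul (cone R + U) X) (cone R - U) = cscale 2 X.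
Proof.
move=> UX; have UXU : cmul (cmul U X) U = - X by rewrite UX -cmulA U_sqr cmulNr cmul1r.
rewrite cmulDl cmul1l cmulBr cmul1r cmulDl UXU -UX.
by apply/ffunP => A; rewrite !ffunE; ring.
Qed.

Lemma rotor_factor_conj_anti X :
  cmul X U = - cmul U X -> cmul (cmul (cone R + U) X) (cone R - U) = cscale 2 (cmul U X).
Proof.
move=> XU; have UXU : cmul (cmul U X) U = X.
  by rewrite -cmulA XU cmulNr cmulA U_sqr cmulNl cmul1l opprK.
rewrite cmulDl cmul1l cmulBr cmul1r cmulDl UXU XU.
by apply/ffunP => A; rewrite !ffunE; ring.
Qed.

End RotorFactor.

Definition sqr_neg (u : sblade) : bool := kswap u.2 u.2.

Definition sbconj (u x : sblade) : sblade :=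
  if kswap u.2 x.2 == kswap x.2 u.2 then x else sbmul u x.

Definition plus_prod_terms (us : seq sblade) : seq sblade :=
  foldr (fun u ys => ys ++ map (sbmul u) ys) [:: sbone] us.

Section RotorProducts.
Variable R : realFieldType.
Local Notation mv := {ffun blade_idx -> R}.

Definition plus_prod (us : seq sblade) : mv :=
  foldr (fun u acc => cmul (cone R + sb R u) acc) (cone R) us.

Definition minus_prod (us : seq sblade) : mv :=
  foldr (fun u acc => cmul acc (cone R - sb R u)) (cone R) us.

Lemma sb_sqr_neg u : sqr_neg u -> cmul (sb R u) (sb R u) = - cone R.
Proof. by move=> neg; rewrite sb_sqr -[kswap _ _]/(sqr_neg u) neg cscaleN1. Qed.

Lemma plus_minus_prod us : all sqr_neg us ->
  cmul (plus_prod us) (minus_prod us) = cscale (2 ^+ size us) (cone R) /\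
  cmul (minus_prod us) (plus_prod us) = cscale (2 ^+ size us) (cone R).
Proof.
elim: us => [|u us IH]; first by rewrite /= cmul1l expr0 cscale1.
move=> /andP [/sb_sqr_neg neg /IH [PM MP]].
have [fPM fMP] := rotor_factor_inv neg.
rewrite /= -/(plus_prod us) -/(minus_prod us); split.
  rewrite (_ : cmul _ _ = cmul (cone R + sb R u)
                (cmul (cmul (plus_prod us) (minus_prod us)) (cone R - sb R u))).
    by rewrite PM cmulZl cmul1l cmulZr fPM cscaleA exprSr.
  by rewrite !cmulA.
rewrite (_ : cmul _ _ = cmul (minus_prod us)
              (cmul (cmul (cone R - sb R u) (cone R + sb R u)) (plus_prod us))).
  by rewrite fMP cmulZl cmul1l cmulZr MP cscaleA exprS.
by rewrite !cmulA.
Qed.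

Lemma plus_prod_conj us x : all sqr_neg us ->
  cmul (cmul (plus_prod us) (sb R x)) (minus_prod us) =
  cscale (2 ^+ size us) (sb R (foldr sbconj x us)).
Proof.
elim: us => [|u us IH]; first by rewrite /= cmul1l cmul1r expr0 cscale1.
move=> /andP [/sb_sqr_neg neg /IH {}IH].
rewrite /= -/(plus_prod us) -/(minus_prod us); set y := foldr sbconj x us.
rewrite (_ : cmul _ _ = cmul (cmul (cone R + sb R u)
          (cmul (cmul (plus_prod us) (sb R x)) (minus_prod us))) (cone R - sb R u)).
  rewrite IH cmulZr cmulZl exprSr -cscaleA; congr cscale; rewrite /sbconj.
  case: (kswap u.2 y.2 =P kswap y.2 u.2) => [comm | anti].
    rewrite (rotor_factor_conj_comm neg) //.
    by rewrite sb_commute comm addbb expr0 cscale1.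
  rewrite (rotor_factor_conj_anti neg); first by rewrite sb_mul.
  rewrite [in RHS]sb_commute.
  by move: anti; case: (kswap _ _); case: (kswap _ _) => //= _; rewrite expr1 cscaleN1 opprK.
by rewrite !cmulA.
Qed.

Lemma plus_prod_expand us : plus_prod us = \sum_(y <- plus_prod_terms us) sb R y.
Proof.
elim: us => [|u us IH] /=; first by rewrite big_seq1 sb_one.
rewrite big_cat big_map IH cmulDl cmul1l cmul_sumr; congr (_ + _).
by apply: eq_bigr => y _; rewrite sb_mul.
Qed.

End RotorProducts.

Definition sbfind (ys : seq sblade) (k : key) : sblade := nth sbone ys (index k (map snd ys)).

Lemma sum_sb_perm (R : realFieldType) {ys zs : seq sblade} :
  uniq (map snd zs) -> perm_eq (map snd ys) (map snd zs) ->
  \sum_(y <- ys) sb R y = \sum_(z <- zs) cscale ((-1) ^+ ((sbfind ys z.2).1 (+) z.1)) (sb R z).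
Proof.
move=> uniq_zs perm_keys; have uniq_ys : uniq (map snd ys) by rewrite (perm_uniq perm_keys).
have sbfindK i : (i < size ys)%N -> sbfind ys (nth sbone ys i).2 = nth sbone ys i.
  by move=> lt_i; rewrite /sbfind -(nth_map _ [::]) // index_uniq ?size_map.
have -> : \sum_(z <- zs) cscale ((-1) ^+ ((sbfind ys z.2).1 (+) z.1)) (sb R z) =
          \sum_(k <- map snd zs) sb R (sbfind ys k).
  rewrite big_map; apply: eq_big_seq => z z_zs.
  have : z.2 \in map snd ys by rewrite (perm_mem perm_keys) map_f.
  rewrite /sb cscaleA -signr_addb -addbA addbb addbF -index_mem => lt_z.
  by rewrite -(nth_map _ [::]) -?(size_map snd) // nth_index // -index_mem.
rewrite -(perm_big _ perm_keys) (big_nth sbone) [RHS](big_nth [::]) size_map.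
rewrite !big_nat; apply: eq_bigr => i /= lt_i.
by rewrite (nth_map sbone) // sbfindK.
Qed.

Definition splanes (t p : nat) : seq (nat * nat) :=
  let mu := nth [::] PhiStar_terms t in
  [seq (nth 0%N mu q.1, nth 0%N mu q.2) | q <- nth [::] pairings p].

Definition rotor_factor (eb : (nat * nat) * bool) : sblade :=
  let e := ekey [:: eb.1.1; eb.1.2] in (eb.2 (+) e.1, e.2).

Definition rotor_factors (t p s : nat) : seq sblade :=
  map rotor_factor (zip (splanes t p) (nth [::] sign_patterns s)).

Definition phis : seq sblade := map ekey Phi_terms.

Definition pkey (ab : nat * nat) : key := (ekey [:: ab.1; ab.2]).2.

Definition keq (a b : key) : bool := all (fun i => nth false a i == nth false b i) (iota 0 15).

Definition ksize (a : key) : nat := count (nth false a) (iota 0 15).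

Definition valid_plane (ab : nat * nat) : bool := [&& 0 < ab.1, ab.1 < ab.2 & ab.2 <= 15]%N.

Definition planes_ok (t p : nat) : bool :=
  (size (splanes t p) == 4) && all valid_plane (splanes t p).

(* The finite check behind the theorem: the four rotor factors square to -1,
   conjugation by them permutes the keys of the terms of [Phi], and among the
   terms of the expanded rotor the 2-blades are exactly its four planes, each
   occurring once with its sign. *)
Definition rotor_ok (t p s : nat) : bool :=
  let us := rotor_factors t p s in
  [&& size us == 4, all sqr_neg us,
      perm_eq [seq (foldr sbconj x us).2 | x <- phis] (map snd phis),
      all (fun i => let pk := pkey (nth (0, 0) (splanes t p) i) in
                    [seq y.1 | y <- plus_prod_terms us & keq y.2 pk]
                      == [:: nth false (nth [::] sign_patterns s) i]) (iota 0 4) &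
      all (fun y => (ksize y.2 != 2) || has (fun ab => keq y.2 (pkey ab)) (splanes t p))
          (plus_prod_terms us)].

Definition planes_separate (t p t' p' : nat) : bool :=
  ((t, p) == (t', p')) || has (fun ab => ab \notin splanes t' p') (splanes t p).

Lemma all_rotor_ok :
  all (fun t => all (fun p => planes_ok t p && all (rotor_ok t p) (iota 0 4)) (iota 0 7))
      (iota 0 15).
Proof. by vm_compute. Qed.

Lemma all_planes_separate :
  all (fun t => all (fun p => all (fun t' => all (planes_separate t p t') (iota 0 7))
      (iota 0 15)) (iota 0 7)) (iota 0 15).
Proof. by vm_compute. Qed.

Lemma uniq_keys_phis : uniq (map snd phis).
Proof. by vm_compute. Qed.

Lemma uniq_sign_patterns : uniq sign_patterns.
Proof. by vm_compute. Qed.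

Lemma all_iota_ord {n} {P : pred nat} : all P (iota 0 n) -> forall i : 'I_n, P i.
Proof. by move=> /allP allP i; apply: allP; rewrite mem_iota leq0n ltn_ord. Qed.

Lemma kset_eq a b : (kset a == kset b) = keq a b.
Proof.
apply/eqP/allP => [E i | E].
  rewrite mem_iota add0n => /andP[_ lt_i]; apply/eqP.
  by have := congr1 (fun S : {set 'I_15} => Ordinal lt_i \in S) E; rewrite !inE.
by apply/setP => i; rewrite !inE; apply/eqP/E; rewrite mem_iota ltn_ord.
Qed.

Lemma card_kset a : #|kset a| = ksize a.
Proof. by rewrite /ksize -val_enum_ord count_map cardsE cardE size_filter enumT. Qed.

Definition pset (ab : nat * nat) : {set 'I_15} := [set inord ab.1.-1; inord ab.2.-1].

Lemma inord_pred_eq a b : (0 < a <= 15)%N -> (0 < b <= 15)%N ->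
  ((inord a.-1 : 'I_15) == inord b.-1) = (a == b).
Proof. by move=> a_ok b_ok; rewrite -val_eqE /= !inordK; lia. Qed.

Lemma pset_inj : {in valid_plane &, injective pset}.
Proof.
move=> [a b] [c d] /and3P[/= a0 ab b15] /and3P[/= c0 cd d15] E.
have in_ab x : (x \in pset (a, b)) = (x \in pset (c, d)) by rewrite E.
have := in_ab (inord a.-1); have := in_ab (inord b.-1).
have := in_ab (inord c.-1); have := in_ab (inord d.-1).
rewrite /pset /= !inE !inord_pred_eq; try lia.
by move=> *; apply/eqP; rewrite xpair_eqE; lia.
Qed.

Lemma pset_neq ab : valid_plane ab -> (inord ab.1.-1 : 'I_15) != inord ab.2.-1.
Proof. by case: ab => a b /and3P[/= ? ? ?]; rewrite inord_pred_eq; lia. Qed.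

Lemma card_pset ab : valid_plane ab -> #|pset ab| = 2.
Proof. by move=> /pset_neq neq; rewrite cards2 neq. Qed.

Lemma kset_pkey ab : valid_plane ab -> kset (pkey ab) = pset ab.
Proof.
move=> /pset_neq neq; rewrite /pkey kset_ekey /=.
apply/setP => i; rewrite !inE.
have [-> | _] := eqVneq i (inord ab.1.-1); first by rewrite (negbTE neq) ?eqxx.
by case: (i == _).
Qed.

Section Rotors.
Variable R : realFieldType.
Local Notation mv := {ffun blade_idx -> R}.

Lemma planes_ok_at (t : 'I_15) (p : 'I_7) : planes_ok t p.
Proof. by have /andP[] := all_iota_ord (all_iota_ord all_rotor_ok t) p. Qed.

Lemma rotor_ok_at (t : 'I_15) (p : 'I_7) (s : 'I_4) : rotor_ok t p s.
Proof. by have /andP[_ /all_iota_ord] := all_iota_ord (all_iota_ord all_rotor_ok t) p; apply. Qed.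

Lemma rotor_factorE (eb : (nat * nat) * bool) :
  cone R + cscale ((-1) ^+ eb.2) (eprod R [:: eb.1.1; eb.1.2]) = cone R + sb R (rotor_factor eb).
Proof. by rewrite eprod_sb /sb cscaleA -signr_addb. Qed.

Lemma rotorE (t : 'I_15) (p : 'I_7) (s : 'I_4) :
  rotor R t p s = cscale (1 / 4) (plus_prod R (rotor_factors t p s)).
Proof. by rewrite /rotor (eq_map rotor_factorE) /plus_prod /rotor_factors !foldr_map. Qed.

Lemma Phi_sum : Phi R = \sum_(x <- phis) sb R x.
Proof.
rewrite /Phi /phis big_map (big_nth [::]) big_mkord.
by apply: eq_bigr => k _; rewrite /Phi_k eprod_sb.
Qed.

Lemma Phi_kE (k : 'I_15) : Phi_k R k = sb R (nth sbone phis k).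
Proof. by rewrite /Phi_k eprod_sb (nth_map [::]). Qed.

Definition rotor_inv (t : 'I_15) (p : 'I_7) (s : 'I_4) : mv :=
  cscale (1 / 4) (minus_prod R (rotor_factors t p s)).

Lemma quarter_sqr_mul16 : (1 / 4 : R) * (1 / 4) * 2 ^+ 4 = 1.
Proof. by rewrite !exprS expr0; field. Qed.

Lemma rotor_invertible t p s :
  cmul (rotor R t p s) (rotor_inv t p s) = cone R /\
  cmul (rotor_inv t p s) (rotor R t p s) = cone R.
Proof.
have /and5P[/eqP size4 sqr _ _ _] := rotor_ok_at t p s.
have [PM MP] := plus_minus_prod R _ sqr.
by rewrite rotorE /rotor_inv !cmulZl !cmulZr PM MP size4 !cscaleA quarter_sqr_mul16 cscale1.
Qed.

Lemma rotor_conj_Phi t p s : exists eta : 'I_15 -> bool,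
  cmul (cmul (rotor R t p s) (Phi R)) (rotor_inv t p s) =
  \sum_(k < 15) cscale ((-1) ^+ eta k) (Phi_k R k).
Proof.
have /and5P[/eqP size4 sqr perm_keys _ _] := rotor_ok_at t p s.
set ys := [seq foldr sbconj x (rotor_factors t p s) | x <- phis].
exists (fun k => (sbfind ys (nth sbone phis k).2).1 (+) (nth sbone phis k).1).
have -> : cmul (cmul (rotor R t p s) (Phi R)) (rotor_inv t p s) = \sum_(y <- ys) sb R y.
  rewrite rotorE /rotor_inv Phi_sum !cmulZl cmulZr cmul_sumr cmul_suml !cscaleA.
  rewrite cscale_sumr [RHS]big_map; apply: eq_bigr => x _.
  by rewrite plus_prod_conj // size4 cscaleA quarter_sqr_mul16 cscale1.
rewrite (sum_sb_perm R uniq_keys_phis); last by rewrite -map_comp.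
rewrite (big_nth sbone) big_mkord.
by apply: eq_bigr => k _; rewrite Phi_kE.
Qed.

Lemma rotor_coef t p s S : rotor R t p s S =
  1 / 4 * \sum_(y <- plus_prod_terms (rotor_factors t p s)) (-1) ^+ y.1 * (kset y.2 == S)%:R.
Proof.
rewrite rotorE plus_prod_expand !ffunE sum_ffunE; congr (_ * _).
by apply: eq_bigr => y _; rewrite sb_coef.
Qed.

Lemma rotor_coef_plane t p s i : (i < 4)%N ->
  rotor R t p s (pset (nth (0, 0) (splanes t p) i)) =
  1 / 4 * (-1) ^+ nth false (nth [::] sign_patterns s) i.
Proof.
move=> lt_i; have /andP[/eqP size4 /allP valid] := planes_ok_at t p.
have /and5P[_ _ _ /allP coef_ok _] := rotor_ok_at t p s.
have i_in : i \in iota 0 4 by rewrite mem_iota.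
have /eqP signs := coef_ok i i_in.
rewrite rotor_coef -kset_pkey ?valid ?mem_nth ?size4 //; congr (_ * _).
set pk := pkey _ in signs *.
transitivity
  (\sum_(b <- [seq y.1 | y <- plus_prod_terms (rotor_factors t p s) & keq y.2 pk]) (-1) ^+ b : R).
  rewrite big_map big_filter [RHS]big_mkcond.
  by apply: eq_bigr => y _; rewrite kset_eq mulr_natr mulrb.
by rewrite signs big_seq1.
Qed.

Lemma plane_setE (t : 'I_15) (p : 'I_7) (S : {set 'I_15}) :
  (S \in plane_set t p) = (S \in map pset (splanes t p)).
Proof. by rewrite inE. Qed.

Lemma rotor_coef_offplane t p (s : 'I_4) (S : {set 'I_15}) :
  #|S| = 2 -> S \notin plane_set t p -> rotor R t p s S = 0.
Proof.
move=> card2 notin; have /andP[_ /allP valid] := planes_ok_at t p.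
have /and5P[_ _ _ _ /allP two_sets] := rotor_ok_at t p s.
rewrite rotor_coef big1_seq ?mulr0 // => y /andP[_ y_in].
case: eqP => [kS|]; last by rewrite mulr0.
have /orP[|/hasP[ab ab_in]] := two_sets y y_in; first by rewrite -card_kset kS card2.
rewrite -kset_eq kS kset_pkey ?valid // => /eqP SE.
by case/negP: notin; rewrite plane_setE SE map_f.
Qed.

Lemma plane_set_rotor_support t p (s : 'I_4) :
  plane_set t p = [set S : {set 'I_15} | (#|S| == 2) && (rotor R t p s S != 0)].
Proof.
apply/setP => S; rewrite [in RHS]inE.
have /andP[/eqP size4 /allP valid] := planes_ok_at t p.
case: (boolP (S \in plane_set t p)) => [|notin].
  rewrite plane_setE => /mapP[ab ab_in ->].
  rewrite card_pset ?valid // -(nth_index (0, 0) ab_in) rotor_coef_plane ?eqxx /=.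
    by rewrite mulf_neq0 ?signr_eq0 // div1r invr_eq0 pnatr_eq0.
  by have := ab_in; rewrite -index_mem size4.
by case: (#|S| =P 2) => //= card2; rewrite rotor_coef_offplane ?eqxx.
Qed.

End Rotors.

Lemma plane_set_inj : injective (fun tp : 'I_15 * 'I_7 => plane_set tp.1 tp.2).
Proof.
move=> [t p] [t' p'] /= E.
have /andP[_ /allP valid] := planes_ok_at t p.
have /andP[_ /allP valid'] := planes_ok_at t' p'.
have := all_iota_ord (all_iota_ord (all_iota_ord (all_iota_ord all_planes_separate t) p) t') p'.
case/orP => [/eqP [/val_inj -> /val_inj ->] // | /hasP[ab ab_in]].
have : pset ab \in plane_set t' p' by rewrite -E plane_setE map_f.
rewrite plane_setE => /mapP[ab' ab'_in /pset_inj ab_ab'].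
by rewrite ab_ab' ?ab'_in //; [exact: valid | exact: valid'].
Qed.

Lemma size_sign_pattern (s : 'I_4) : size (nth [::] sign_patterns s) = 4.
Proof. by case: s => -[|[|[|[|]]]]. Qed.

Lemma rotor_inj (R : realFieldType) :
  injective (fun tps : 'I_15 * 'I_7 * 'I_4 => rotor R tps.1.1 tps.1.2 tps.2).
Proof.
move=> [[t p] s] [[t' p'] s'] /= E.
have tpE : (t, p) = (t', p').
  by apply: plane_set_inj; rewrite /= (plane_set_rotor_support R t p s) E -plane_set_rotor_support.
case: tpE E => <- <- E.
have patE : nth [::] sign_patterns s = nth [::] sign_patterns s'.
  apply: (@eq_from_nth _ false) => [|i]; rewrite !size_sign_pattern // => lt_i.
  apply: (@signr_inj R); apply: (@mulfI _ (1 / 4)); first by rewrite div1r invr_eq0 pnatr_eq0.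
  by rewrite -(rotor_coef_plane R t p s) // -(rotor_coef_plane R t p s') // E.
have := nth_uniq [::] (ltn_ord s : s < size sign_patterns)%N
  (ltn_ord s' : s' < size sign_patterns)%N uniq_sign_patterns.
by rewrite patE eqxx => /esym/eqP/val_inj ->.
Qed.

Theorem theorem3 (R : realFieldType) :
  (forall (t : 'I_15) (p : 'I_7) (s : 'I_4),
     (exists Rinv : mvT R,
        cmul (rotor R t p s) Rinv = cone R /\ cmul Rinv (rotor R t p s) = cone R) /\
     (forall Rinv : mvT R,
        cmul (rotor R t p s) Rinv = cone R -> cmul Rinv (rotor R t p s) = cone R ->
        exists eta : 'I_15 -> bool,
          cmul (cmul (rotor R t p s) (Phi R)) Rinv =
          \sum_(k < 15) cscale ((-1) ^+ eta k) (Phi_k R k))) /\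
  injective (fun tp : 'I_15 * 'I_7 => plane_set tp.1 tp.2) /\
  injective (fun tps : 'I_15 * 'I_7 * 'I_4 => rotor R tps.1.1 tps.1.2 tps.2).
Proof.
split; last by split; [exact: plane_set_inj | exact: rotor_inj].
move=> t p s; have [RRinv RinvR] := rotor_invertible R t p s.
split; first by exists (rotor_inv R t p s).
move=> Rinv _ RinvR'.
by rewrite (inverse_unique _ RinvR' RRinv); apply: rotor_conj_Phi.
Qed.
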